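(* Let $n$ be a positive integer, let $\mathcal F$ be an $\mathcal N$-saturated family of subsets of $[n]$, and let $A_1,\dots,A_k$ and $B_1,\dots,B_l$ be elements of $\mathcal F$, where $k,l\ge 1$. If $\bigcap_{i=1}^k A_i\notin\mathcal F$, then in every induced copy of $\mathcal N$ in $\mathcal F\cup\{\bigcap_{i=1}^k A_i\}$ that contains $\bigcap_{i=1}^k A_i$, this set is a minimal element of the copy; moreover there is such an induced copy in which $\bigcap_{i=1}^k A_i$ is the minimal element that is comparable to both maximal elements. Similarly, if $\bigcup_{i=1}^l B_i\notin\mathcal F$, then in every induced copy of $\mathcal N$ in $\mathcal F\cup\{\bigcup_{i=1}^l B_i\}$ containing $\bigcup_{i=1}^l B_i$, this set is a maximal element of the copy; moreover there is such an induced copy in which $\bigcup_{i=1}^l B_i$ is the maximal element that is comparable to both minimal elements.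
   Context: The poset $\mathcal N$ has four elements $a,b,c,d$ with $a<c$, $b<c$, $b<d$ and no other comparabilities (so $a,b$ are its minimal elements, $c,d$ its maximal elements; $c$ is the unique maximal element comparable to both minimal elements and $b$ the unique minimal element comparable to both maximal elements). A family $\mathcal Q$ of sets (ordered by inclusion) contains an induced copy of $\mathcal N$ if there are distinct sets in $\mathcal Q$ whose inclusion relations are exactly those of $a,b,c,d$ above. A family $\mathcal F$ of subsets of $[n]=\{1,\dots,n\}$ is $\mathcal N$-saturated if $\mathcal F$ contains no induced copy of $\mathcal N$, but for every $S\subseteq[n]$ with $S\notin\mathcal F$, the family $\mathcal F\cup\{S\}$ contains an induced copy of $\mathcal N$. *)

From mathcomp Require Import all_boot.
Set Implicit Arguments. Unset Strict Implicit. Unset Printing Implicit Defensive.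

(* (a,b,c,d) is an induced copy of N in Q: distinct members of Q whose
   inclusion relations are exactly a < c, b < c, b < d. *)
Definition induced_N (n : nat) (Q : {set {set 'I_n}}) (a b c d : {set 'I_n}) : Prop :=
  [/\ [&& a \in Q, b \in Q, c \in Q & d \in Q],
      uniq [:: a; b; c; d],
      [&& a \subset c, b \subset c & b \subset d] &
      [&& ~~ (c \subset a), ~~ (c \subset b), ~~ (d \subset b),
          ~~ (a \subset b), ~~ (b \subset a), ~~ (a \subset d),
          ~~ (d \subset a), ~~ (c \subset d) & ~~ (d \subset c)]].

Definition contains_N (n : nat) (Q : {set {set 'I_n}}) : Prop :=
  exists a b c d, induced_N Q a b c d.

Definition N_saturated (n : nat) (F : {set {set 'I_n}}) : Prop :=
  ~ contains_N F /\
  forall S : {set 'I_n}, S \notin F -> contains_N (S |: F).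

From mathcomp Require Import all_boot.
Set Implicit Arguments. Unset Strict Implicit. Unset Printing Implicit Defensive.

(* Only reflexivity and transitivity of inclusion are used, and the poset N is
   self-dual, so a union is handled as an intersection for reverse inclusion.
   Both halves are thus one statement about a greatest lower bound m of
   members A_i of an N-free family Q.  If m were the maximal element c (resp. d)
   of an N-copy in m |: Q, some A_i would fail to lie above d (resp. above a),
   and replacing m by that A_i would give an N-copy inside Q.  Saturation yields
   a copy containing m, hence with m minimal; if m is in position a, pick A_i
   not above b: either A_i <= c and (A_i, b, c, d) is an N-copy in Q, or
   (b, m, c, A_i) is the required copy. *)

Definition N_shape (T : Type) (le : rel T) (a b c d : T) : Prop :=
  [/\ [/\ le a c, le b c & le b d],
      [/\ ~~ le c a, ~~ le c b, ~~ le d b, ~~ le a b & ~~ le b a] &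
      [/\ ~~ le a d, ~~ le d a, ~~ le c d & ~~ le d c]].

Definition N_copy (T : finType) (le : rel T) (Q : {set T}) (a b c d : T) : Prop :=
  [/\ a \in Q, b \in Q, c \in Q, d \in Q & N_shape le a b c d].

Definition has_N_copy (T : finType) (le : rel T) (Q : {set T}) : Prop :=
  exists a b c d, N_copy le Q a b c d.

Lemma mem_setU1_neq (T : finType) (x y : T) (Q : {set T}) :
  x \in y |: Q -> y != x -> x \in Q.
Proof. by case/setU1P=> [->|//]; rewrite eqxx. Qed.

Section Flip.
Variables (T : finType) (le : rel T).
Let ge : rel T := fun x y => le y x.

Lemma N_shape_flip a b c d : N_shape le a b c d -> N_shape ge d c b a.
Proof. by case=> [[ac bc bd] [ca cb db ab ba] [ad da cd dc]]. Qed.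

Lemma N_copy_flip Q a b c d : N_copy le Q a b c d -> N_copy ge Q d c b a.
Proof. by case=> Ma Mb Mc Md /N_shape_flip. Qed.

Lemma has_N_copy_flip Q : has_N_copy le Q -> has_N_copy ge Q.
Proof. by case=> a [b [c [d /N_copy_flip abcd]]]; exists d, c, b, a. Qed.
End Flip.

Section NCopies.
Variables (T : finType) (le : rel T).
Local Notation N_shape := (N_shape le).
Local Notation N_copy := (N_copy le).

Lemma N_copy_setU1 x Q a b c d :
  N_copy (x |: Q) a b c d -> x \notin [:: a; b; c; d] -> N_copy Q a b c d.
Proof.
case=> Ma Mb Mc Md shape; rewrite !inE !negb_or => /and4P[xa xb xc xd].
by split; rewrite ?(mem_setU1_neq Ma, mem_setU1_neq Mb, mem_setU1_neq Mc, mem_setU1_neq Md).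
Qed.

Hypothesis le_refl : reflexive le.
Hypothesis le_trans : transitive le.

Lemma nle_neq x y : ~~ le x y -> x != y.
Proof. by apply: contraNneq => ->. Qed.

Lemma N_shape_uniq a b c d : N_shape a b c d -> uniq [:: a; b; c; d].
Proof.
case=> _ [ca cb db ab _] [ad _ cd _].
rewrite /= !inE !negb_or (eq_sym a c) (eq_sym b c) (eq_sym b d).
by rewrite !nle_neq.
Qed.

Lemma nle_le_l x y z : le x y -> ~~ le x z -> ~~ le y z.
Proof. by move=> xy; apply: contra; apply: le_trans. Qed.

Lemma nle_le_r x y z : le y z -> ~~ le x z -> ~~ le x y.
Proof. by move=> yz; apply: contra => /le_trans; apply. Qed.

Lemma N_shape_raise_a a b c d a' :
  N_shape a b c d -> le a a' -> le a' c -> ~~ le b a' -> N_shape a' b c d.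
Proof.
case=> [[ac bc bd] [ca cb db ab ba] [ad da cd dc]] aa' a'c ba'.
split; split=> //.
- exact: nle_le_l bc ba'.
- exact: nle_le_l aa' ab.
- exact: nle_le_l aa' ad.
- exact: nle_le_r a'c dc.
Qed.

Lemma N_shape_raise_c a b c d c' :
  N_shape a b c d -> le c c' -> ~~ le d c' -> N_shape a b c' d.
Proof.
case=> [[ac bc bd] [ca cb db ab ba] [ad da cd dc]] cc' dc'.
split; split=> //.
- exact: le_trans cc'.
- exact: le_trans cc'.
- exact: nle_le_l cc' ca.
- exact: nle_le_l cc' cb.
- exact: nle_le_l cc' cd.
Qed.

Lemma N_shape_raise_d a b c d d' :
  N_shape a b c d -> le d d' -> ~~ le a d' -> N_shape a b c d'.
Proof.
case=> [[ac bc bd] [ca cb db ab ba] [ad da cd dc]] dd' ad'.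
split; split=> //.
- exact: le_trans dd'.
- exact: nle_le_l dd' db.
- exact: nle_le_l dd' da.
- exact: nle_le_l ac ad'.
- exact: nle_le_l dd' dc.
Qed.

Lemma N_shape_swap_minimal a b c d e :
  N_shape a b c d -> le a e -> ~~ le b e -> ~~ le e c -> N_shape b a c e.
Proof.
case=> [[ac bc bd] [ca cb db ab ba] [ad da cd dc]] ae be ec.
split; split=> //.
- exact: nle_le_r ac ec.
- exact: nle_le_l ae ab.
- exact: nle_le_l bc be.
Qed.

Variables (Q : {set T}) (I : finType) (A : I -> T) (m : T).
Hypothesis Q_N_free : ~ has_N_copy le Q.
Hypothesis A_in_Q : forall i, A i \in Q.
Hypothesis m_le_A : forall i, le m (A i).
Hypothesis m_greatest : forall x, (forall i, le x (A i)) -> le x m.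

Lemma exists_nle_of_nle_meet x : ~~ le x m -> exists i, ~~ le x (A i).
Proof.
by move=> xm; apply/forallPn; apply: contra xm => /forallP; apply: m_greatest.
Qed.

Lemma meet_N_copy_not_c a b d : ~ N_copy (m |: Q) a b m d.
Proof.
case=> Ma Mb _ Md shape; case: (shape) => _ [ma mb _ _ _] [_ _ md dm].
have [i di] := exists_nle_of_nle_meet dm.
case: Q_N_free; exists a, b, (A i), d; split.
- exact: mem_setU1_neq Ma (nle_neq ma).
- exact: mem_setU1_neq Mb (nle_neq mb).
- exact: A_in_Q.
- exact: mem_setU1_neq Md (nle_neq md).
- exact: N_shape_raise_c shape (m_le_A i) di.
Qed.

Lemma meet_N_copy_not_d a b c : ~ N_copy (m |: Q) a b c m.
Proof.
case=> Ma Mb Mc _ shape; case: (shape) => _ [_ _ mb _ _] [am ma _ mc].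
have [i ai] := exists_nle_of_nle_meet am.
case: Q_N_free; exists a, b, c, (A i); split.
- exact: mem_setU1_neq Ma (nle_neq ma).
- exact: mem_setU1_neq Mb (nle_neq mb).
- exact: mem_setU1_neq Mc (nle_neq mc).
- exact: A_in_Q.
- exact: N_shape_raise_d shape (m_le_A i) ai.
Qed.

Lemma meet_N_copy_minimal a b c d :
  N_copy (m |: Q) a b c d -> m \in [:: a; b; c; d] -> m \in [:: a; b].
Proof.
move=> copy /[!inE] /or4P[/eqP ->|/eqP ->|/eqP mc|/eqP md]; rewrite ?eqxx ?orbT //.
  by rewrite -mc in copy; case: (meet_N_copy_not_c copy).
by rewrite -md in copy; case: (meet_N_copy_not_d copy).
Qed.

Lemma meet_N_copy_swap b c d :
  N_copy (m |: Q) m b c d -> exists e, N_copy (m |: Q) b m c e.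
Proof.
case=> _ Mb Mc Md shape; case: (shape) => _ [cm _ _ mb bm] [md _ _ _].
have [i bi] := exists_nle_of_nle_meet bm.
have [Aic|nAic] := boolP (le (A i) c).
  case: Q_N_free; exists (A i), b, c, d; split.
  - exact: A_in_Q.
  - exact: mem_setU1_neq Mb (nle_neq mb).
  - by apply: (mem_setU1_neq Mc); rewrite eq_sym nle_neq.
  - exact: mem_setU1_neq Md (nle_neq md).
  - exact: N_shape_raise_a shape (m_le_A i) Aic bi.
exists (A i); split=> //.
- exact: setU11.
- by apply/setU1r/A_in_Q.
- exact: N_shape_swap_minimal shape (m_le_A i) bi nAic.
Qed.

Lemma meet_N_copy_center :
  has_N_copy le (m |: Q) -> exists a c d, N_copy (m |: Q) a m c d.
Proof.
case=> a [b [c [d copy]]].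
have [m_in|m_notin] := boolP (m \in [:: a; b; c; d]); last first.
  by case: Q_N_free; exists a, b, c, d; apply: N_copy_setU1 copy m_notin.
move: (meet_N_copy_minimal copy m_in) => /[!inE] /orP[/eqP ma|/eqP mb].
  rewrite -ma in copy; have [e copy'] := meet_N_copy_swap copy.
  by exists b, c, e.
by rewrite -mb in copy; exists a, c, d.
Qed.
End NCopies.

Section SubsetFamilies.
Variable n : nat.
Implicit Types (F Q : {set {set 'I_n}}) (a b c d : {set 'I_n}).

Definition subset_rel : rel {set 'I_n} := fun X Y => X \subset Y.
Definition supset_rel : rel {set 'I_n} := fun X Y => Y \subset X.

Lemma subset_rel_refl : reflexive subset_rel.
Proof. exact: subxx. Qed.

Lemma subset_rel_trans : transitive subset_rel.
Proof. by move=> Y X Z; apply: subset_trans. Qed.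

Lemma supset_rel_refl : reflexive supset_rel.
Proof. exact: subxx. Qed.

Lemma supset_rel_trans : transitive supset_rel.
Proof. by move=> Y X Z XY YZ; apply: subset_trans YZ XY. Qed.

Lemma induced_N_copy Q a b c d : induced_N Q a b c d <-> N_copy subset_rel Q a b c d.
Proof.
split.
  case=> /and4P[Ma Mb Mc Md] _ /and3P[ac bc bd].
  by case/and5P=> [ca cb db ab /and5P[ba ad da cd dc]].
case=> Ma Mb Mc Md shape; have := N_shape_uniq subset_rel_refl shape.
case: shape => [[ac bc bd] [ca cb db ab ba] [ad da cd dc]] abcd.
split; [exact/and4P | by [] | exact/and3P | ].
by apply/and5P; split=> //; apply/and5P.
Qed.

Lemma contains_N_copy Q : contains_N Q <-> has_N_copy subset_rel Q.
Proof.
by split=> -[a [b [c [d /induced_N_copy abcd]]]]; exists a, b, c, d.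
Qed.

Lemma bigcap_N_saturated F (I : finType) (A : I -> {set 'I_n}) :
    N_saturated F -> (forall i, A i \in F) -> \bigcap_i A i \notin F ->
  (forall a b c d, induced_N (\bigcap_i A i |: F) a b c d ->
     \bigcap_i A i \in [:: a; b; c; d] -> \bigcap_i A i \in [:: a; b]) /\
  (exists a c d, induced_N (\bigcap_i A i |: F) a (\bigcap_i A i) c d).
Proof.
move=> [F_free F_sat] A_in cap_notin.
have free : ~ has_N_copy subset_rel F by move/contains_N_copy.
have cap_le i : subset_rel (\bigcap_i A i) (A i) by apply: bigcap_inf.
have cap_greatest X : (forall i, subset_rel X (A i)) -> subset_rel X (\bigcap_i A i).
  by move=> XA; apply/bigcapsP=> i _; apply: XA.
have minimal := meet_N_copy_minimal subset_rel_refl subset_rel_trans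
  free A_in cap_le cap_greatest.
have center := meet_N_copy_center subset_rel_refl subset_rel_trans
  free A_in cap_le cap_greatest.
split=> [a b c d /induced_N_copy | ]; first exact: minimal.
have /contains_N_copy/center[a [c [d /induced_N_copy copy]]] := F_sat _ cap_notin.
by exists a, c, d.
Qed.

Lemma bigcup_N_saturated F (I : finType) (B : I -> {set 'I_n}) :
    N_saturated F -> (forall i, B i \in F) -> \bigcup_i B i \notin F ->
  (forall a b c d, induced_N (\bigcup_i B i |: F) a b c d ->
     \bigcup_i B i \in [:: a; b; c; d] -> \bigcup_i B i \in [:: c; d]) /\
  (exists a b d, induced_N (\bigcup_i B i |: F) a b (\bigcup_i B i) d).
Proof.
move=> [F_free F_sat] B_in cup_notin.
have free : ~ has_N_copy supset_rel F by move/has_N_copy_flip/contains_N_copy.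
have cup_le i : supset_rel (\bigcup_i B i) (B i) by apply: bigcup_sup.
have cup_greatest X : (forall i, supset_rel X (B i)) -> supset_rel X (\bigcup_i B i).
  by move=> BX; apply/bigcupsP=> i _; apply: BX.
have minimal := meet_N_copy_minimal supset_rel_refl supset_rel_trans
  free B_in cup_le cup_greatest.
have center := meet_N_copy_center supset_rel_refl supset_rel_trans
  free B_in cup_le cup_greatest.
split=> [a b c d /induced_N_copy/N_copy_flip/minimal | ].
  rewrite -[[:: d; c; b; a]]/(rev [:: a; b; c; d]) -[[:: d; c]]/(rev [:: c; d]).
  by rewrite !mem_rev.
have /contains_N_copy/has_N_copy_flip/center[a [c [d /N_copy_flip copy]]] :=
  F_sat _ cup_notin.
by exists d, c, a; apply/induced_N_copy.
Qed.

End SubsetFamilies.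

Theorem lemma2p2 (n : nat) (F : {set {set 'I_n}}) (k l : nat)
    (A : 'I_k -> {set 'I_n}) (B : 'I_l -> {set 'I_n}) :
  0 < n -> N_saturated F -> 0 < k -> 0 < l ->
  (forall i, A i \in F) -> (forall j, B j \in F) ->
  ((\bigcap_(i < k) A i) \notin F ->
     (forall a b c d, induced_N ((\bigcap_(i < k) A i) |: F) a b c d ->
        (\bigcap_(i < k) A i) \in [:: a; b; c; d] ->
        (\bigcap_(i < k) A i) \in [:: a; b]) /\
     (exists a c d, induced_N ((\bigcap_(i < k) A i) |: F) a (\bigcap_(i < k) A i) c d)) /\
  ((\bigcup_(j < l) B j) \notin F ->
     (forall a b c d, induced_N ((\bigcup_(j < l) B j) |: F) a b c d ->
        (\bigcup_(j < l) B j) \in [:: a; b; c; d] ->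
        (\bigcup_(j < l) B j) \in [:: c; d]) /\
     (exists a b d, induced_N ((\bigcup_(j < l) B j) |: F) a b (\bigcup_(j < l) B j) d)).
Proof.
move=> _ F_sat _ _ A_in B_in.
by split; [apply: bigcap_N_saturated | apply: bigcup_N_saturated].
Qed.
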